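(* (a) Let $G$ be a uniformly random ADMG on vertex set $\{1,\dots,n\}$. Then there is a constant $c>0$ such that for all sufficiently large $n$, $\mathbb{E}[|\mathrm{MEC}(G)|] \ge 2^{c n^2}$. (b) Let $H$ be a uniformly random DCG on vertex set $\{1,\dots,n\}$. Then there is a constant $c>0$ such that for all sufficiently large $n$, $\mathbb{E}[|\mathrm{MEC}(H)|] \ge 2^{c n}$.
   Context: An acyclic directed mixed graph (ADMG) on vertex set $V$ consists of a set of directed edges (ordered pairs $(v,w)$, $v\neq w$, written $v\to w$) containing no directed cycle, together with a set of bidirected edges (unordered pairs $\{v,w\}$, $v\ne w$, written $v\leftrightarrow w$). A uniformly random ADMG is uniform over all ADMGs on $V$; equivalently, a uniformly random DAG together with each bidirected edge included independently with probability $1/2$. A directed cyclic graph (DCG) on $V$ is any directed graph without self-loops (both $v\to w$ and $w\to v$ may be present; directed cycles allowed); a uniformly random DCG includes each of the $n(n-1)$ possible directed edges independently with probability $1/2$. Paths and d-separation: a path from $a$ to $b$ is a sequence $v_1,e_1,\dots,e_{k-1},v_k$ with $v_1=a\neq b=v_k$ (vertices may repeat), each $e_j$ an edge (directed in either direction, or bidirected) between $v_j$ and $v_{j+1}$. An internal vertex $v_j$ is a collider if both $e_{j-1}$ and $e_j$ have an arrowhead at $v_j$ (directed into $v_j$ or bidirected). $x$ is a descendant of $v$ if $x=v$ or there is a directed path from $v$ to $x$. A path is active given $Z\subseteq V\setminus\{a,b\}$ if every internal non-collider is not in $Z$ and every collider is in $Z$ or has a descendant in $Z$; $a,b$ are d-connected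 given $Z$ if an active path exists, else d-separated. Two graphs on the same vertex set are Markov equivalent if they have the same d-separation statements. $\mathrm{MEC}(G)$ is the set of graphs of the same model class (ADMGs in (a), DCGs in (b)) on the same vertex set that are Markov equivalent to $G$. *)

From HB Require Import structures.
From mathcomp Require Import all_boot all_order all_algebra.
From mathcomp Require Import boolp reals exp.
Set Implicit Arguments. Unset Strict Implicit. Unset Printing Implicit Defensive.
Import Order.TTheory GRing.Theory Num.Theory.
Local Open Scope ring_scope.

(* A mixed graph on the vertex set 'I_n (standing for {1,...,n}):
   G.1 (v,w) = true  iff the directed edge v -> w is present;
   G.2 (v,w) = true  iff the bidirected edge v <-> w is present
   (for ADMGs G.2 is required to be symmetric and irreflexive, so it
   encodes a set of unordered pairs). *)
Definition mgraph (n : nat) :=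
  ({ffun 'I_n * 'I_n -> bool} * {ffun 'I_n * 'I_n -> bool})%type.

Definition dir n (G : mgraph n) : rel 'I_n := fun v w => G.1 (v, w).
Definition bi n (G : mgraph n) : rel 'I_n := fun v w => G.2 (v, w).

Definition is_admg n (G : mgraph n) : bool :=
  [&& [forall v, ~~ dir G v v],
      [forall v, forall w, dir G v w ==> ~~ connect (dir G) w v],
      [forall v, ~~ bi G v v] &
      [forall v, forall w, bi G v w == bi G w v]].

Definition is_dcg n (G : mgraph n) : bool :=
  [forall v, ~~ dir G v v] && [forall v, forall w, ~~ bi G v w].

(* Kind of an edge traversed by a path step from x to y:
   Fwd : x -> y,  Bwd : x <- y,  Bid : x <-> y. *)
Inductive ekind := Fwd | Bwd | Bid.

Definition edge_ok n (G : mgraph n) (k : ekind) (x y : 'I_n) : bool :=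
  match k with Fwd => dir G x y | Bwd => dir G y x | Bid => bi G x y end.

(* arrowhead at the end (target) / start (source) of a traversed edge *)
Definition head_end (k : ekind) : bool :=
  match k with Fwd | Bid => true | Bwd => false end.
Definition head_start (k : ekind) : bool :=
  match k with Bwd | Bid => true | Fwd => false end.

(* A path from a is given by a and the list of steps (edge kind, next vertex);
   vertices may repeat. *)
Fixpoint valid_path n (G : mgraph n) (x : 'I_n) (s : seq (ekind * 'I_n)) : bool :=
  match s with
  | [::] => true
  | (k, y) :: s' => edge_ok G k x y && valid_path G y s'
  end.

Definition is_descendant n (G : mgraph n) (x v : 'I_n) : bool :=
  connect (dir G) v x.

Fixpoint active_internal n (G : mgraph n) (Z : {set 'I_n})
    (s : seq (ekind * 'I_n)) : bool :=
  match s with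
  | (k1, y) :: (((k2, _) :: _) as s') =>
      (if head_end k1 && head_start k2
       then (y \in Z) || [exists z in Z, is_descendant G z y]
       else y \notin Z)
      && active_internal G Z s'
  | _ => true
  end.

Definition d_connected n (G : mgraph n) (a b : 'I_n) (Z : {set 'I_n}) : Prop :=
  exists s : seq (ekind * 'I_n),
    [&& valid_path G a s, active_internal G Z s & last a (map snd s) == b].

Definition markov_equiv n (G G' : mgraph n) : Prop :=
  forall (a b : 'I_n) (Z : {set 'I_n}), a != b -> a \notin Z -> b \notin Z ->
    (d_connected G a b Z <-> d_connected G' a b Z).

Definition MEC_admg n (G : mgraph n) : {set mgraph n} :=
  [set G' | is_admg G' && `[< markov_equiv G G' >]].
Definition MEC_dcg n (G : mgraph n) : {set mgraph n} :=
  [set G' | is_dcg G' && `[< markov_equiv G G' >]].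

Definition E_MEC_admg (R : realType) (n : nat) : R :=
  (\sum_(G : mgraph n | is_admg G) (#|MEC_admg G|%:R : R))
    / (#|[set G : mgraph n | is_admg G]|%:R).
Definition E_MEC_dcg (R : realType) (n : nat) : R :=
  (\sum_(G : mgraph n | is_dcg G) (#|MEC_dcg G|%:R : R))
    / (#|[set G : mgraph n | is_dcg G]|%:R).

From HB Require Import structures.
From mathcomp Require Import all_boot all_order all_algebra.
From mathcomp Require Import boolp reals exp.
From mathcomp Require Import zify lra.
Import Order.TTheory GRing.Theory Num.Theory.
Set Implicit Arguments. Unset Strict Implicit. Unset Printing Implicit Defensive.

(* Any two graphs in which every pair of distinct vertices is adjacent are
   Markov equivalent, since the single edge between a and b is an active path
   whatever Z is.  With d = n(n-1)/2 vertex pairs, there are at least 3^d such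
   ADMGs (choose a -> b, a <-> b or both for each a < b) and at least 3^d such
   DCGs (a -> b, b -> a or both), while there are at most 8^d graphs of either
   kind (three bits per pair).  All complete graphs lying in one equivalence
   class, E|MEC| >= 9^d / 8^d >= 2^(d/6), which is exponential in n^2. *)

Lemma sum_card_ge_square (T : finType) (P : pred T) (M : T -> {set T})
    (S : {set T}) :
  {subset S <= P} -> (forall x, x \in S -> S \subset M x) ->
  (#|S| * #|S| <= \sum_(x | P x) #|M x|)%N.
Proof.
move=> SP SM; rewrite (bigID (mem S)) /=; apply: leq_trans (leq_addr _ _).
rewrite -sum_nat_const [leqRHS](eq_bigl (mem S)) => [|x]; last first.
  by rewrite andb_idl //; apply: SP.
by apply: leq_sum => x Sx; apply: subset_leq_card (SM x Sx).
Qed.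

Lemma connect_homo_leq (T : finType) (e : rel T) (f : T -> nat) x y :
  (forall a b, e a b -> f a < f b)%N -> connect e x y -> (f x <= f y)%N.
Proof.
move=> ef /connectP[p]; elim: p x => [|z p IHp] x /=; first by move=> _ ->.
by case/andP=> /ef xz /IHp zp /zp; apply: leq_trans (ltnW xz).
Qed.

Lemma expn9_ge_expn2_expn8 k d : (6 * k <= d)%N -> (2 ^ k * 8 ^ d <= 9 ^ d)%N.
Proof.
have expn_homo m1 m2 e : (m1 <= m2 -> m1 ^ e <= m2 ^ e)%N.
  by move=> le_m; elim: e => // e IHe; rewrite !expnS leq_mul.
move=> /subnKC <-; rewrite !(expnD _ (6 * k)) mulnA !expnM -expnMn.
by apply: leq_mul; apply: expn_homo; lia.
Qed.

Section CompleteGraphs.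
Variable n : nat.
Implicit Types (G : mgraph n) (a b : 'I_n).

Definition complete G : bool :=
  [forall a, forall b, (a != b) ==> [|| dir G a b, dir G b a | bi G a b]].

Lemma complete_d_connected G a b Z :
  complete G -> a != b -> d_connected G a b Z.
Proof.
move=> /forallP/(_ a)/forallP/(_ b)/implyP cG /cG /or3P[e|e|e].
- by exists [:: (Fwd, b)]; rewrite /= e eqxx.
- by exists [:: (Bwd, b)]; rewrite /= e eqxx.
- by exists [:: (Bid, b)]; rewrite /= e eqxx.
Qed.

Lemma complete_markov_equiv G G' :
  complete G -> complete G' -> markov_equiv G G'.
Proof. by move=> cG cG' a b Z ab _ _; split=> _; apply: complete_d_connected. Qed.

Definition upper := [pred p : 'I_n * 'I_n | (p.1 < p.2)%N].

Lemma card_upper : (2 * #|upper| + n = n * n)%N.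
Proof.
pose swap (p : 'I_n * 'I_n) := (p.2, p.1).
have swap_inj : injective swap by case=> a b [c d] [-> ->].
have card_lower : #|[pred p : 'I_n * 'I_n | (p.2 < p.1)%N]| = #|upper|.
  rewrite -[RHS](card_image swap_inj); apply: eq_card => -[a b]; rewrite !inE /=.
  by apply/idP/imageP => [ba|[[c d] /= dc [-> ->]] //]; exists (b, a).
have card_diag : #|[pred p : 'I_n * 'I_n | p.1 == p.2]| = n.
  rewrite -[RHS]card_ord -[RHS](@card_image _ _ (fun i => (i, i))) => [|i j [] //].
  apply: eq_card => -[a b]; rewrite !inE /=.
  by apply/eqP/imageP => [<-|[c _ [-> ->]] //]; exists a.
have card_not_upper : #|[predC upper]| =
    (#|[pred p : 'I_n * 'I_n | (p.2 < p.1)%N]| +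
     #|[pred p : 'I_n * 'I_n | p.1 == p.2]|)%N.
  rewrite -(cardID [pred p : 'I_n * 'I_n | p.1 == p.2]) addnC.
  congr (_ + _)%N; apply: eq_card => -[a b]; rewrite !inE /=.
  - by rewrite -val_eqE /=; case: ltngtP.
  - by rewrite -val_eqE /=; case: ltngtP.
have := cardC upper; rewrite card_prod card_ord card_not_upper card_lower card_diag.
by move=> <-; rewrite addnA mul2n -addnn.
Qed.

Definition simple_mgraph G : Prop :=
  [/\ irreflexive (dir G), irreflexive (bi G) & symmetric (bi G)].

Lemma admg_simple G : is_admg G -> simple_mgraph G.
Proof.
case/and4P=> /forallP irr_dir _ /forallP irr_bi /forallP sym_bi.
by split=> [v|v|v w]; [apply/negbTE | apply/negbTE | apply/eqP/(forallP (sym_bi v))].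
Qed.

Lemma dcg_simple G : is_dcg G -> simple_mgraph G.
Proof.
case/andP=> /forallP irr_dir /forallP no_bi.
have bi0 v w : bi G v w = false by apply/negbTE/(forallP (no_bi v)).
by split=> [v|v|v w]; rewrite ?bi0 //; apply/negbTE.
Qed.

Definition upper_code G : {ffun 'I_n * 'I_n -> bool * bool * bool} :=
  [ffun p => if p \in upper then (G.1 p, G.1 (p.2, p.1), G.2 p)
             else (false, false, false)].

Lemma upper_code_inj G G' : simple_mgraph G -> simple_mgraph G' ->
  upper_code G = upper_code G' -> G = G'.
Proof.
case: G G' => [D B] [D' B'] [irrD irrB symB] [irrD' irrB' symB'] codeE.
have code a b : (a < b)%N ->
    [/\ D (a, b) = D' (a, b), D (b, a) = D' (b, a) & B (a, b) = B' (a, b)].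
  by move=> ab; move/ffunP/(_ (a, b)): codeE; rewrite !ffunE inE ab => -[].
congr pair; apply/ffunP => -[a b].
  case: (ltngtP a b) => [/code[]|/code[]|/val_inj <-] //.
  by have := irrD a; have := irrD' a; rewrite /dir /= => -> ->.
case: (ltngtP a b) => [/code[]|/code[]|/val_inj <-] //.
  by have := symB a b; have := symB' a b; rewrite /bi /= => -> -> _ _ ->.
by have := irrB a; have := irrB' a; rewrite /bi /= => -> ->.
Qed.

Lemma card_simple_le (P : pred (mgraph n)) :
  (forall G, P G -> simple_mgraph G) -> (#|[set G | P G]| <= 8 ^ #|upper|)%N.
Proof.
move=> Psimple; have code_inj : {in [set G | P G] &, injective upper_code}.
  by move=> G G'; rewrite !inE => /Psimple sG /Psimple sG'; apply: upper_code_inj.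
have card8 : #|[set: bool * bool * bool]| = 8 by rewrite cardsT !card_prod card_bool.
rewrite -(card_in_imset code_inj) -card8 -(card_pffun_on (false, false, false)).
apply/subset_leq_card/subsetP.
move=> _ /imsetP[G _ ->]; apply/pffun_onP; split=> [|t _]; last by rewrite inE.
by apply/subsetP => p; rewrite inE ffunE; case: (p \in upper); rewrite ?eqxx.
Qed.

Definition adjacency_codes :=
  pffun_on (false, false) upper [pred t : bool * bool | t.1 || t.2].

Lemma card_adjacency_codes : #|adjacency_codes| = (3 ^ #|upper|)%N.
Proof.
have card3 : #|predC1 (false, false)| = 3%N by rewrite cardC1 card_prod card_bool.
by rewrite card_pffun_on -card3; congr (_ ^ _)%N; apply: eq_card => -[[] []].
Qed.

Lemma adjacency_code_off h p :
  h \in adjacency_codes -> p \notin upper -> h p = (false, false).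
Proof.
case/pffun_onP=> /subsetP sub _ not_up.
by apply/eqP; apply: contraNT not_up => hp; apply: sub; rewrite inE.
Qed.

Lemma adjacency_code_on h p :
  h \in adjacency_codes -> p \in upper -> (h p).1 || (h p).2.
Proof.
case/pffun_onP=> _ /(_ (h p)) codeR up_p.
by have := codeR (image_f _ up_p); rewrite inE.
Qed.

Lemma adjacency_code_upper h p :
  h \in adjacency_codes -> (h p).1 || (h p).2 -> p \in upper.
Proof.
move=> hc; apply: contraTT => /(adjacency_code_off hc) -> //.
Qed.

Definition admg_of_code (h : {ffun 'I_n * 'I_n -> bool * bool}) : mgraph n :=
  ([ffun p => (h p).1], [ffun p => (h p).2 || (h (p.2, p.1)).2]).

Definition dcg_of_code (h : {ffun 'I_n * 'I_n -> bool * bool}) : mgraph n :=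
  ([ffun p => (h p).1 || (h (p.2, p.1)).2], [ffun => false]).

Lemma swap_notin_upper (p : 'I_n * 'I_n) : p \in upper -> (p.2, p.1) \notin upper.
Proof. by rewrite !inE -leqNgt => /ltnW. Qed.

Lemma admg_of_code_inj : {in adjacency_codes &, injective admg_of_code}.
Proof.
move=> h h' hc h'c [eD eB]; apply/ffunP => p.
have [up_p|not_up] := boolP (p \in upper); last by rewrite !adjacency_code_off.
move/ffunP/(_ p): eD; move/ffunP/(_ p): eB; rewrite !ffunE.
rewrite !(adjacency_code_off _ (swap_notin_upper up_p)) // !orbF.
by case: (h p) (h' p) => [x y] [x' y'] /= -> ->.
Qed.

Lemma dcg_of_code_inj : {in adjacency_codes &, injective dcg_of_code}.
Proof.
move=> h h' hc h'c [eD]; apply/ffunP => p.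
have [up_p|not_up] := boolP (p \in upper); last by rewrite !adjacency_code_off.
have swap_off := adjacency_code_off _ (swap_notin_upper up_p).
move/ffunP/(_ (p.2, p.1)): (eD); move/ffunP/(_ p): eD; rewrite !ffunE /=.
rewrite !swap_off // !orbF /= -surjective_pairing.
by case: (h p) (h' p) => [x y] [x' y'] /= -> ->.
Qed.

Lemma admg_of_code_complete h : h \in adjacency_codes ->
  is_admg (admg_of_code h) && complete (admg_of_code h).
Proof.
move=> hc; have dir_upper a b : dir (admg_of_code h) a b -> (a < b)%N.
  rewrite /dir ffunE => hab.
  by have := @adjacency_code_upper h (a, b) hc; rewrite hab inE; apply.
apply/andP; split; last first.
  apply/forallP => a; apply/forallP => b; apply/implyP => ab.
  rewrite /dir /bi !ffunE /=.
  case: (ltngtP a b) => [lt_ab|lt_ba|/val_inj eq_ab]; last by rewrite eq_ab eqxx in ab.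
  - by have := @adjacency_code_on h (a, b) hc lt_ab; case/orP=> ->; rewrite ?orbT.
  - by have := @adjacency_code_on h (b, a) hc lt_ba; case/orP=> ->; rewrite ?orbT.
apply/and4P; split.
- by apply/forallP => v; apply/negP => /dir_upper; rewrite ltnn.
- apply/forallP => v; apply/forallP => w; apply/implyP => /dir_upper vw.
  by apply/negP => /(connect_homo_leq dir_upper); rewrite leqNgt vw.
- apply/forallP => v; rewrite /bi ffunE /= orbb.
  by rewrite (adjacency_code_off hc) // inE ltnn.
- by apply/forallP => v; apply/forallP => w; rewrite /bi !ffunE orbC.
Qed.

Lemma dcg_of_code_complete h : h \in adjacency_codes ->
  is_dcg (dcg_of_code h) && complete (dcg_of_code h).
Proof.
move=> hc; apply/andP; split; last first.
  apply/forallP => a; apply/forallP => b; apply/implyP => ab.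
  rewrite /dir /bi !ffunE /=.
  case: (ltngtP a b) => [lt_ab|lt_ba|/val_inj eq_ab]; last by rewrite eq_ab eqxx in ab.
  - by have := @adjacency_code_on h (a, b) hc lt_ab; case/orP=> ->; rewrite ?orbT.
  - by have := @adjacency_code_on h (b, a) hc lt_ba; case/orP=> ->; rewrite ?orbT.
apply/andP; split; last by apply/forallP => v; apply/forallP => w; rewrite /bi ffunE.
apply/forallP => v; rewrite /dir ffunE /=.
by rewrite (adjacency_code_off hc) // inE ltnn.
Qed.

Lemma card_complete_admg_ge :
  (3 ^ #|upper| <= #|[set G | is_admg G && complete G]|)%N.
Proof.
rewrite -card_adjacency_codes -(card_in_imset admg_of_code_inj).
apply/subset_leq_card/subsetP => _ /imsetP[h hc ->].
by rewrite inE admg_of_code_complete.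
Qed.

Lemma card_complete_dcg_ge :
  (3 ^ #|upper| <= #|[set G | is_dcg G && complete G]|)%N.
Proof.
rewrite -card_adjacency_codes -(card_in_imset dcg_of_code_inj).
apply/subset_leq_card/subsetP => _ /imsetP[h hc ->].
by rewrite inE dcg_of_code_complete.
Qed.

Lemma sum_card_class_ge (P : pred (mgraph n)) (M : mgraph n -> {set mgraph n}) :
  (forall G, P G -> simple_mgraph G) ->
  (forall G G', P G -> complete G -> P G' -> complete G' -> G' \in M G) ->
  (3 ^ #|upper| <= #|[set G | P G && complete G]|)%N ->
  (2 ^ (#|upper| %/ 6) * #|[set G | P G]| <= \sum_(G | P G) #|M G|)%N.
Proof.
move=> Psimple PM le_complete; set S := [set G | P G && complete G].
have S_sq : (#|S| * #|S| <= \sum_(G | P G) #|M G|)%N.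
  apply: sum_card_ge_square => [G|G]; first by rewrite inE => /andP[].
  rewrite inE => /andP[PG cG]; apply/subsetP => G'.
  by rewrite inE => /andP[PG' cG']; apply: PM.
apply: leq_trans S_sq; apply: leq_trans (leq_mul le_complete le_complete).
rewrite -expnMn; apply: leq_trans (expn9_ge_expn2_expn8 (k := #|upper| %/ 6) _).
  by rewrite leq_mul2l card_simple_le ?orbT.
by rewrite mulnC leq_divM.
Qed.

Lemma card_gt0_of_complete (P : pred (mgraph n)) :
  (3 ^ #|upper| <= #|[set G | P G && complete G]|)%N -> (0 < #|[set G | P G]|)%N.
Proof.
move=> le_complete; apply: leq_trans (leq_trans le_complete _).
  by rewrite expn_gt0.
by apply/subset_leq_card/subsetP => G; rewrite !inE => /andP[].
Qed.

End CompleteGraphs.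

Local Open Scope ring_scope.

Lemma ler_pow2_ratio (R : realType) (k s t : nat) : (0 < t)%N ->
  (2 ^ k * t <= s)%N -> (2 : R) ^+ k <= s%:R / t%:R.
Proof. by move=> t_gt0 le_s; rewrite ler_pdivlMr ?ltr0n // -natrX -natrM ler_nat. Qed.

Lemma expectation_class_ge (R : realType) n (P : pred (mgraph n))
    (M : mgraph n -> {set mgraph n}) :
  (forall G, P G -> simple_mgraph G) ->
  (forall G G', P G -> complete G -> P G' -> complete G' -> G' \in M G) ->
  (3 ^ #|upper n| <= #|[set G | P G && complete G]|)%N ->
  (2 : R) ^+ (#|upper n| %/ 6) <=
    (\sum_(G | P G) (#|M G|%:R : R)) / #|[set G | P G]|%:R.
Proof.
move=> Psimple PM le_complete; rewrite -natr_sum.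
by apply: ler_pow2_ratio; [apply: card_gt0_of_complete | apply: sum_card_class_ge].
Qed.

Lemma E_MEC_admg_ge (R : realType) n :
  (2 : R) ^+ (#|upper n| %/ 6) <= E_MEC_admg R n.
Proof.
apply: expectation_class_ge (@admg_simple n) _ (card_complete_admg_ge n).
move=> G G' _ cG aG' cG'; rewrite inE aG' /=.
by apply/asboolP; apply: complete_markov_equiv.
Qed.

Lemma E_MEC_dcg_ge (R : realType) n :
  (2 : R) ^+ (#|upper n| %/ 6) <= E_MEC_dcg R n.
Proof.
apply: expectation_class_ge (@dcg_simple n) _ (card_complete_dcg_ge n).
move=> G G' _ cG dG' cG'; rewrite inE dG' /=.
by apply/asboolP; apply: complete_markov_equiv.
Qed.

Lemma sqr_le_48_upper n : (5 <= n)%N -> (n * n <= 48 * (#|upper n| %/ 6))%N.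
Proof. by move=> n_ge5; have := card_upper n; nia. Qed.

Lemma powR_le_upper (R : realType) n : (5 <= n)%N ->
  (2 : R) `^ (1 / 48 * n%:R ^+ 2) <= 2 ^+ (#|upper n| %/ 6).
Proof.
move=> n_ge5; rewrite -[2 ^+ _]powR_mulrn //; apply: ler_powR; first lra.
have := sqr_le_48_upper n_ge5; rewrite -(ler_nat R) !natrM expr2; lra.
Qed.

Theorem theorem2 (R : realType) :
  (exists c : R, 0 < c /\ exists N : nat, forall n : nat, (N <= n)%N ->
     (2 : R) `^ (c * (n%:R ^+ 2)) <= E_MEC_admg R n) /\
  (exists c : R, 0 < c /\ exists N : nat, forall n : nat, (N <= n)%N ->
     (2 : R) `^ (c * n%:R) <= E_MEC_dcg R n).
Proof.
split; exists (1 / 48); (split; first lra); exists 5%N => n n_ge5.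
  exact: le_trans (powR_le_upper R n_ge5) (E_MEC_admg_ge R n).
apply: le_trans (le_trans (powR_le_upper R n_ge5) (E_MEC_dcg_ge R n)).
apply: ler_powR; first lra.
have : n%:R <= n%:R ^+ 2 :> R by rewrite -natrX ler_nat; nia.
lra.
Qed.
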